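(* Let $X$ be a real Banach space, $h:X\to\mathbb R\cup\{+\infty\}$ proper and lower semicontinuous, $\bar x$ a global minimizer of $h$, and $p,q\in(1,\infty)$ with $p^{-1}+q^{-1}=1$. If $x\in X$ and $\xi\in X^*$ satisfy $x\in\operatorname{argmin}_{y\in X}\{\sqrt[p]{h(y)-h(\bar x)}-\langle\xi,y\rangle\}$, then $$x\in\operatorname{argmin}_{y\in X}\Big\{h(y)-p\sqrt[q]{h(x)-h(\bar x)}\,\langle\xi,y\rangle\Big\}.$$
   Context: Here $\sqrt[p]{+\infty}=+\infty$. *)

From HB Require Import structures.
From mathcomp Require Import all_boot all_order all_algebra.
From mathcomp Require Import all_classical all_reals all_analysis.
Set Implicit Arguments. Unset Strict Implicit. Unset Printing Implicit Defensive.
Import Order.TTheory GRing.Theory Num.Theory.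

Definition argmin {T : Type} {R : realType} (f : T -> \bar R) : set T :=
  [set x | forall y, (f x <= f y)%E].

Definition proper_fun {T : Type} {R : realType} (h : T -> \bar R) : Prop :=
  (forall y, h y <> -oo%E) /\ (exists y, h y <> +oo%E).

From HB Require Import structures.
From mathcomp Require Import all_boot all_order all_algebra.
From mathcomp Require Import all_classical all_reals all_analysis.
From mathcomp Require Import lra.
Import Order.TTheory GRing.Theory Num.Theory.

Set Implicit Arguments.
Unset Strict Implicit.

(* Write a = h x - h xbar and b = h y - h xbar. Minimality of x gives
   v - u <= b^(1/p) - a^(1/p) with u = xi x, v = xi y. Multiplying by
   p a^(1/q) and using a^(1/q) a^(1/p) = a, the claim b - a >= p a^(1/q) (v - u)
   reduces to Young's inequality p a^(1/q) b^(1/p) <= (p - 1) a + b. The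
   infinite values of h are harmless: h x = +oo would make the root objective
   infinite at x while it is finite at a point of the (proper) domain. *)

Local Open Scope ring_scope.

Lemma div_conjugate_exponent (R : realType) (p q : R) : 1 < p -> p^-1 + q^-1 = 1 ->
  p / q = p - 1.
Proof.
move=> p_gt1 pq.
have -> : q^-1 = 1 - p^-1 by rewrite -pq addrAC subrr add0r.
by rewrite mulrBr mulr1 mulfV // gt_eqF // (lt_trans ltr01).
Qed.

Lemma young_powR_inv (R : realType) (p q a b : R) : 1 < p -> 1 < q ->
  p^-1 + q^-1 = 1 -> 0 <= a -> 0 <= b ->
  p * (a `^ q^-1 * b `^ p^-1) <= (p - 1) * a + b.
Proof.
move=> p_gt1 q_gt1 pq a_ge0 b_ge0.
have [p_gt0 q_gt0] : 0 < p /\ 0 < q by split; lra.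
have root_powK (c r : R) : 0 <= c -> 0 < r -> (c `^ r^-1) `^ r = c.
  by move=> c_ge0 r_gt0; rewrite -powRrM mulVf ?gt_eqF // powRr1.
have := conjugate_powR (powR_ge0 a q^-1) (powR_ge0 b p^-1) q_gt0 p_gt0.
rewrite addrC !root_powK // => /(_ pq) young.
apply: le_trans (ler_wpM2l (ltW p_gt0) young) _.
rewrite -(div_conjugate_exponent p_gt1 pq) mulrDr [p * (b / p)]mulrC divfK ?gt_eqF //.
by rewrite mulrA mulrAC.
Qed.

Lemma root_objective_le_linear (R : realType) (p q a b u v : R) :
  1 < p -> 1 < q -> p^-1 + q^-1 = 1 -> 0 <= a -> 0 <= b ->
  a `^ p^-1 - u <= b `^ p^-1 - v ->
  a + p * a `^ q^-1 * v <= b + p * a `^ q^-1 * u.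
Proof.
move=> p_gt1 q_gt1 pq a_ge0 b_ge0 root_le.
have p_gt0 : 0 < p by lra.
have roots_mul : a `^ q^-1 * a `^ p^-1 = a.
  by rewrite -powRD addrC pq ?powRr1 // oner_eq0.
have A_ge0 : 0 <= p * a `^ q^-1 by rewrite mulr_ge0 ?powR_ge0 // ltW.
have : p * a `^ q^-1 * (v - u) <= p * a `^ q^-1 * (b `^ p^-1 - a `^ p^-1).
  by rewrite ler_wpM2l //; lra.
have := young_powR_inv p_gt1 q_gt1 pq a_ge0 b_ge0.
rewrite mulrBl mul1r -!mulrA !mulrBr roots_mul => {root_le}; lra.
Qed.

Local Open Scope classical_set_scope.

Theorem lemma2p4 (R : realType) (X : completeNormedModType R)
    (h : X -> \bar R) (xbar : X) (p q : R) (x : X) (xi : {scalar X}) :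
  proper_fun h -> lower_semicontinuous h ->
  (forall y, (h xbar <= h y)%E) ->
  1 < p -> 1 < q -> p^-1 + q^-1 = 1 ->
  continuous xi ->
  argmin (fun y => (poweR (h y - h xbar) p^-1 - (xi y)%:E)%E) x ->
  argmin (fun y => (h y - p%:E * poweR (h x - h xbar) q^-1 * (xi y)%:E)%E) x.
Proof.
move=> [h_neqNy [y0 hy0_fin]] _ hmin p_gt1 q_gt1 pq _ x_argmin y.
have pinv_neq0 : p^-1 != 0 by rewrite invr_neq0 // gt_eqF //; lra.
case hy0: (h y0) hy0_fin => [r0| |] // _; last by have := h_neqNy y0; rewrite hy0.
have := hmin y0; have := hmin x; have := hmin y.
have := x_argmin y0; have := x_argmin y; rewrite /= hy0.
case: (h xbar) (h_neqNy xbar) => [c| |] // _.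
case: (h x) (h_neqNy x) => [hx| |] // _.
case: (h y) (h_neqNy y) => [hy| |] // _ /=.
- rewrite -!EFinD !lee_fin => root_le _ hy_ge hx_ge _.
  have := root_objective_le_linear p_gt1 q_gt1 pq _ _ root_le.
  by rewrite subr_ge0 hx_ge subr_ge0 hy_ge => /(_ isT isT); lra.
- by move=> *; exact: leey.
- by move=> _; rewrite /= (negbTE pinv_neq0) -EFinD leye_eq.
Qed.
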